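(* Let $G$ be a finite simple graph such that $Y_G\in\Gamma$. Then $G$ has no pair of disjoint edges. Furthermore, if $G$ is connected, then $G$ is either the triangle $C_3$ or the star graph $S_n$ for some $n\ge1$.
   Context: For a finite simple graph $G$, $X_G$ is its chromatic symmetric function (the sum over proper colorings $\kappa$ of $\prod_v x_{\kappa(v)}$), $\omega$ is the involution on symmetric functions with $\omega(p_r)=(-1)^{r-1}p_r$, and $Y_G=(X_G+\omega(X_G))/2$ is the near chromatic symmetric function. $\Gamma=\mathbb{Q}[p_1,p_3,p_5,\dots]$ where $p_r$ are power sums. Two edges $\{v_1,v_2\}$ and $\{v_3,v_4\}$ are disjoint if $v_1,v_2,v_3,v_4$ are all distinct. $C_3$ is the cycle on three vertices and $S_n$ is the tree on $n$ vertices with one internal vertex and $n-1$ leaves. *)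

From HB Require Import structures.
From mathcomp Require Import all_boot all_order all_algebra.
Set Implicit Arguments. Unset Strict Implicit. Unset Printing Implicit Defensive.
Import Order.TTheory GRing.Theory Num.Theory.
Local Open Scope ring_scope.

Definition simple_graph (V : finType) (e : rel V) : Prop :=
  irreflexive e /\ symmetric e.

Definition connected_graph (V : finType) (e : rel V) : Prop :=
  (0 < #|V|)%N /\ forall u v : V, connect e u v.

Definition has_disjoint_edges (V : finType) (e : rel V) : Prop :=
  exists a b c d : V, [/\ e a b, e c d & uniq [:: a; b; c; d]].

Definition is_triangle (V : finType) (e : rel V) : Prop :=
  #|V| = 3%N /\ forall u v : V, e u v = (u != v).

(* G is the star S_n, n = #|V| >= 1, with center c:
   the edges are exactly the pairs {c, v}, v <> c. *)
Definition is_star (V : finType) (e : rel V) : Prop :=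
  exists c : V, forall u v : V, e u v = (u != v) && ((u == c) || (v == c)).

(* ---------- Symmetric functions ----------
   An element of Lambda_Q is written in terms of power sums as a finite formal
   sum  sum_t  t.1 * p_{t.2_1} * ... * p_{t.2_k}  (t.2 a list of positive
   integers).  Two such expressions denote the same symmetric function iff
   their specializations to (x_1,...,x_N,0,0,...) agree for every N and every
   rational point x (this is exactly equality in Lambda_Q). *)
Definition psum := seq (rat * seq nat).

Definition psum_wf (F : psum) : bool :=
  all (fun t => all (fun r => 0 < r)%N t.2) F.

Definition pow_sum (N : nat) (x : 'I_N -> rat) (r : nat) : rat :=
  \sum_(j < N) x j ^+ r.

Definition psum_eval (N : nat) (x : 'I_N -> rat) (F : psum) : rat :=
  \sum_(t <- F) t.1 * \prod_(r <- t.2) pow_sum x r.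

(* omega(p_r) = (-1)^(r-1) p_r, extended as a ring homomorphism *)
Definition psum_omega (F : psum) : psum :=
  [seq (t.1 * (-1) ^+ (\sum_(r <- t.2) r.-1)%N, t.2) | t <- F].

(* Y = (F + omega F)/2 *)
Definition psum_near (F : psum) : psum :=
  [seq (t.1 / 2%:R, t.2) | t <- F ++ psum_omega F].

(* the symmetric function F lies in Gamma = Q[p_1, p_3, p_5, ...] *)
Definition in_Gamma (F : psum) : Prop :=
  exists Q : psum, all (fun t => all odd t.2) Q /\
    forall (N : nat) (x : 'I_N -> rat), psum_eval x Q = psum_eval x F.

Definition proper_col (V : finType) (e : rel V) (N : nat) (k : {ffun V -> 'I_N})
  : bool := [forall u, forall v, e u v ==> (k u != k v)].

Definition chrom_eval (V : finType) (e : rel V) (N : nat) (x : 'I_N -> rat) : rat :=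
  \sum_(k : {ffun V -> 'I_N} | proper_col e k) \prod_(v : V) x (k v).

Definition represents_XG (V : finType) (e : rel V) (F : psum) : Prop :=
  psum_wf F /\ forall (N : nat) (x : 'I_N -> rat), psum_eval x F = chrom_eval e x.

From HB Require Import structures.
From mathcomp Require Import all_boot all_order all_algebra zify ring.
Set Implicit Arguments. Unset Strict Implicit. Unset Printing Implicit Defensive.
Import GRing.Theory Num.Theory.

(* Set (s+1)t variables to 1, t variables to -1 and the others to 0, so that
   p_r becomes t s for odd r and t (s+2) for even r.  Whitney's expansion
   X_G = sum_(S subset E) (-1)^|S| p_lambda(S), with lambda(S) the component
   sizes of the spanning subgraph (V, S), turns X_G into a polynomial C_s(t)
   whose t^j coefficient collects the S with j components.  Negating the point
   shows that omega X_G becomes (-1)^|V| C_s(-t), so for j of the parity of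
   |V| the t^j coefficients of Y_G and C_s agree; if Y_G is in Gamma, this
   coefficient is s^j times a number independent of s.  For j = |V| - 2 the
   components of S are either all odd, or two of them have size 2 and S is a
   pair of disjoint edges; the coefficient is A (s+2)^2 s^(j-2) + B s^j with A
   the number of such pairs, and comparing s = 1 with s = 2 forces A = 0.
   Finally, a connected graph any two of whose edges meet is a star or C_3. *)

Definition even_blocks (T : finType) (P : {set {set T}}) : {set {set T}} :=
  [set C in P | ~~ odd #|C|].

Section PartitionDefect.
Variables (T : finType) (P : {set {set T}}).
Hypothesis partP : partition P [set: T].

Lemma partition_block_gt0 C : C \in P -> 0 < #|C|.
Proof.
move=> CP; rewrite card_gt0; apply: contraTneq CP => ->.
by case/and3P: partP.
Qed.

Lemma card_partition_defect : #|T| = \sum_(C in P) #|C|.-1 + #|P|.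
Proof.
rewrite -cardsT (card_partition partP) -sum1_card -big_split /=.
by apply: eq_bigr => C CP; rewrite addn1 prednK // partition_block_gt0.
Qed.

Lemma partition_defect_even_blocks :
  \sum_(C in P) #|C|.-1 = #|even_blocks P| + (\sum_(C in P) (#|C|.-1)./2).*2.
Proof.
rewrite -muln2 big_distrl /=.
under eq_bigr => C _ do rewrite -[#|C|.-1]odd_double_half -muln2.
rewrite big_split /=; congr (_ + _).
rewrite -sum1_card (eq_bigl (fun C => (C \in P) && ~~ odd #|C|)); last first.
  by move=> C; rewrite inE.
rewrite big_mkcondr /=; apply: eq_bigr => C CP.
by rewrite -(prednK (partition_block_gt0 CP)) /=; case: odd.
Qed.

Lemma card_small_blocks :
  {in P, forall C : {set T}, #|C| <= 2} -> #|T| = #|even_blocks P| + #|P|.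
Proof.
move=> smallP; rewrite card_partition_defect partition_defect_even_blocks.
by rewrite big1 ?addn0 // => C /smallP; case: #|C| => [|[|[]]].
Qed.

Lemma defect2_blocks : #|P| + 2 = #|T| ->
  even_blocks P = set0 \/ #|even_blocks P| = 2 /\ {in P, forall C : {set T}, #|C| <= 2}.
Proof.
rewrite card_partition_defect partition_defect_even_blocks => defect2.
have [halves0|halves_gt0] := posnP (\sum_(C in P) (#|C|.-1)./2).
  right; split; first by move: defect2; rewrite halves0; lia.
  move=> C CP; move/eqP: halves0; rewrite sum_nat_eq0 => /forallP/(_ C).
  by rewrite CP /=; case: #|C| => [|[|[|[]]]].
by left; apply/eqP; rewrite -cards_eq0; lia.
Qed.
End PartitionDefect.

Section NoDisjointEdges.
Variables (V : finType) (e : rel V).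
Hypotheses (sg : simple_graph e) (nde : ~ has_disjoint_edges e).

Let edge_irr u : e u u = false. Proof. by case: sg. Qed.
Let edge_sym u v : e u v = e v u. Proof. by case: sg => _; apply. Qed.

Lemma edge_neq u v : e u v -> u != v.
Proof. by apply: contraTneq => ->; rewrite edge_irr. Qed.

Lemma edges_meet a b c d : e a b -> e c d -> [|| c == a, c == b, d == a | d == b].
Proof.
move=> eab ecd; apply/negPn/negP; rewrite !negb_or => /and4P[ca cb da db].
apply: nde; exists a, b, c, d; split=> //=.
rewrite !inE !negb_or (edge_neq eab) (edge_neq ecd).
by rewrite ![a == _]eq_sym ![b == _]eq_sym ca cb da db.
Qed.

Definition vertex_cover1 (c : V) : bool :=
  [forall u, forall v, e u v ==> (u == c) || (v == c)].

Lemma edge_away_from a b : e a b -> ~~ vertex_cover1 a -> exists2 c, e b c & c != a.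
Proof.
move=> eab /forallPn[u /forallPn[v]]; rewrite negb_imply negb_or => /and3P[euv ua va].
have := edges_meet eab euv; rewrite (negPf ua) (negPf va) /= => /orP[]/eqP ub.
  by exists v; rewrite // -ub.
by exists u; rewrite // edge_sym -ub.
Qed.

Hypothesis conn : connected_graph e.

Lemma has_neighbour u v : u != v -> exists w, e u w.
Proof.
case: conn => _ /(_ u v) /connectP[[|w p] /= path_uv last_v uv].
  by rewrite last_v eqxx in uv.
by exists w; case/andP: path_uv.
Qed.

Lemma star_of_vertex_cover1 c : vertex_cover1 c -> is_star e.
Proof.
move=> /forallP cover; exists c => u v.
have coverP x y : e x y -> (x == c) || (y == c) by apply: (implyP (forallP (cover x) y)).
have adj_c x : x != c -> e x c.
  move=> xc; have [y exy] := has_neighbour xc.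
  by have := coverP _ _ exy; rewrite (negPf xc) /= => /eqP <-.
apply/idP/idP => [euv|/andP[uv /orP[]/eqP uc]]; first by rewrite edge_neq // coverP.
  by rewrite edge_sym uc adj_c // -uc eq_sym.
by rewrite uc adj_c // -uc.
Qed.

Lemma triangle_of a b c : e a b -> e b c -> e c a -> is_triangle e.
Proof.
move=> eab ebc eca.
have ab := edge_neq eab; have bc := edge_neq ebc; have ca := edge_neq eca.
have abc w : w \in [:: a; b; c].
  apply/negPn/negP; rewrite !inE !negb_or => /and3P[wa wb wc].
  have [y ewy] := has_neighbour wa.
  have := edges_meet eab ewy; have := edges_meet ebc ewy; have := edges_meet eca ewy.
  rewrite (negPf wa) (negPf wb) (negPf wc) /=.
  move=> h1 h2 /orP[]/eqP y_eq; move: h1 h2; rewrite y_eq.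
    by move=> _; rewrite (negPf ab) eq_sym (negPf ca).
  by move=> + _; rewrite (negPf bc) eq_sym (negPf ab).
split.
  have uniq_abc : uniq [:: a; b; c] by rewrite /= !inE negb_or ab eq_sym ca bc.
  rewrite -[3%N]/(size [:: a; b; c]) -(card_uniqP uniq_abc).
  by apply: eq_card => w; rewrite abc.
move=> u v; have := abc u; have := abc v; rewrite !inE.
by case/or3P=> /eqP-> /or3P[]/eqP->; rewrite ?eqxx ?edge_irr //
  ?(eq_sym b a) ?(eq_sym c b) ?(eq_sym a c) ?ab ?bc ?ca // edge_sym.
Qed.

Theorem triangle_or_star : is_triangle e \/ is_star e.
Proof.
have [c /star_of_vertex_cover1|no_cover] := pickP vertex_cover1; first by right.
left; have [v0 _] : exists v0, v0 \in V by case: conn => /card_gt0P.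
have [a [b eab]] : exists a b, e a b.
  have /negbT/forallPn[a /forallPn[b]] := no_cover v0.
  by rewrite negb_imply => /andP[eab _]; exists a, b.
have [c ebc ca] := edge_away_from eab (negbT (no_cover a)).
have [d ead db] := edge_away_from (etrans (edge_sym b a) eab) (negbT (no_cover b)).
have := edges_meet ebc ead.
rewrite (negPf (edge_neq eab)) eq_sym (negPf ca) (negPf db) /= => /eqP dc.
by apply: (triangle_of eab ebc); rewrite edge_sym -dc.
Qed.
End NoDisjointEdges.

Local Open Scope ring_scope.

Lemma eq_poly_posnat (R : numDomainType) (p q : {poly R}) :
  (forall t : nat, (0 < t)%N -> p.[t%:R] = q.[t%:R]) -> p = q.
Proof.
move=> pq; apply/eqP; rewrite -subr_eq0; apply/negPn/negP => pq_neq0.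
pose rs : seq R := [seq i.+1%:R | i <- iota 0 (size (p - q))].
have rs_roots : all (root (p - q)) rs.
  by apply/allP => _ /mapP[i _ ->]; rewrite /root hornerD hornerN pq ?subrr.
have rs_uniq : uniq rs.
  by rewrite map_inj_uniq ?iota_uniq // => i k /eqP; rewrite eqr_nat => /eqP[].
by have := max_poly_roots pq_neq0 rs_roots rs_uniq; rewrite size_map size_iota ltnn.
Qed.

Lemma coef_comp_polyNX (R : comNzRingType) (p : {poly R}) i :
  (p \Po - 'X)`_i = (-1) ^+ i * p`_i.
Proof.
have -> : p \Po - 'X = \poly_(k < size p) ((-1) ^+ k * p`_k).
  rewrite comp_polyE poly_def; apply: eq_bigr => k _.
  by rewrite -scaleN1r exprZn scalerA mulrC.
rewrite coef_poly; case: ltnP => // le_p_i.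
by rewrite nth_default ?mulr0.
Qed.

Lemma prodr_bool (R : nzSemiRingType) (I : finType) (A : {pred I}) (b : I -> bool) :
  \prod_(i in A) (b i)%:R = [forall i in A, b i]%:R :> R.
Proof.
rewrite -big_andE (big_morph (fun c : bool => c%:R : R) (id1 := 1) (op1 := *%R)) //.
by case=> [] [] /=; rewrite ?mul1r ?mul0r.
Qed.

Lemma prod1B_sum_subsets (R : comNzRingType) (I : finType) (E : {set I}) (f : I -> R) :
  \prod_(i in E) (1 - f i) =
  \sum_(S : {set I} | S \subset E) (-1) ^+ #|S| * \prod_(i in S) f i.
Proof.
rewrite big_mkcond (eq_bigr (fun i => (if i \in E then - f i else 0) + 1)); last first.
  by move=> i _; case: (i \in E); rewrite ?add0r // addrC.
rewrite bigA_distr [RHS]big_mkcond; apply: eq_big => // S _.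
case: (boolP (S \subset E)) => [sSE|/subsetPn[i Si Ei]].
  rewrite -prodrN [RHS]big_mkcond; apply: congr_big => // i _.
  by case: ifP => // /(subsetP sSE) ->.
by rewrite (bigD1 i) //= Si (negPf Ei) mul0r.
Qed.

Definition psum_poly (F : psum) (a : nat -> rat) : {poly rat} :=
  \sum_(u <- F) u.1 *: \prod_(r <- u.2) (a r *: 'X).

Lemma psum_eval_poly (P : pred nat) (F : psum) a N (x : 'I_N -> rat) t :
  all (fun u => all P u.2) F -> {in P, forall r, pow_sum x r = a r * t} ->
  psum_eval x F = (psum_poly F a).[t].
Proof.
move=> /allP FP xP; rewrite /psum_eval /psum_poly horner_sum big_seq [RHS]big_seq.
apply: eq_bigr => u uF; rewrite hornerZ horner_prod; congr (_ * _).
rewrite big_seq [RHS]big_seq; apply: eq_bigr => r ru.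
by rewrite hornerZ hornerX xP //; move/allP: (FP u uF); apply.
Qed.

Lemma psum_poly_omega F a :
  psum_poly (psum_omega F) a = psum_poly F (fun r => (-1) ^+ r.-1 * a r).
Proof.
rewrite /psum_poly big_map; apply: eq_bigr => u _ /=.
rewrite -scalerA; congr (_ *: _).
elim: u.2 => [|r l IHl]; first by rewrite !big_nil expr0 scale1r.
by rewrite !big_cons -IHl -scalerAr -!scalerAl !scalerA exprD; congr (_ *: _); ring.
Qed.

Lemma psum_poly_near F a :
  psum_poly (psum_near F) a = 2%:R^-1 *: (psum_poly F a + psum_poly (psum_omega F) a).
Proof.
rewrite /psum_poly big_map big_cat scalerDr !scaler_sumr /=.
by congr (_ + _); apply: eq_bigr => u _; rewrite scalerA mulrC.
Qed.

Lemma psum_wf_near F : psum_wf F -> psum_wf (psum_near F).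
Proof. by move=> wfF; rewrite /psum_wf /psum_near all_map all_cat all_map; apply/andP. Qed.

Lemma coef_psum_poly_const (Q : psum) c j :
  (psum_poly Q (fun=> c))`_j = c ^+ j * \sum_(u <- Q) u.1 * (size u.2 == j)%:R.
Proof.
rewrite /psum_poly coef_sum mulr_sumr; apply: eq_bigr => u _.
have -> : \prod_(r <- u.2) (c *: 'X) = (c *: 'X) ^+ size u.2.
  by elim: u.2 => [|r l IHl]; rewrite ?big_nil ?big_cons ?IHl ?exprS.
rewrite exprZn coefZ coefZ coefXn eq_sym.
by case: eqP => [->|_]; rewrite ?mulr0 // mulrCA.
Qed.

Section EquivClasses.
Variables (V : finType) (R : rel V).
Hypothesis eqR : equivalence_rel R.
Local Notation P := (equivalence_partition R [set: V]).

Let eqR_in : {in [set: V] & &, equivalence_rel R}.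
Proof. by move=> u v w _ _ _; apply: eqR. Qed.

Lemma equiv_classes_partition : partition P [set: V].
Proof. exact: equivalence_partitionP. Qed.

Lemma mem_equiv_class u v : (v \in pblock P u) = R u v.
Proof. by rewrite pblock_equivalence_partition ?in_setT. Qed.

Lemma equiv_class_mem u : pblock P u \in P.
Proof.
by rewrite pblock_mem // (cover_partition equiv_classes_partition) in_setT.
Qed.

Lemma equiv_class_self u : u \in pblock P u.
Proof. by rewrite mem_equiv_class; case: (eqR u u u) => ->. Qed.

Lemma equiv_classes_trivIset : trivIset P.
Proof. by case/and3P: equiv_classes_partition. Qed.

Lemma sum_class_constant_colourings N (x : 'I_N -> rat) (j0 : 'I_N) :
  \sum_(k : {ffun V -> 'I_N} | [forall u, forall v, R u v ==> (k u == k v)])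
     \prod_v x (k v)
  = \prod_(C in P) pow_sum x #|C|.
Proof.
rewrite /pow_sum (big_distr_big_dep j0 (mem P) (fun _ _ => true)) /=.
pose h (g : {ffun {set V} -> 'I_N}) := [ffun v => g (pblock P v)].
pose h' (k : {ffun V -> 'I_N}) :=
  [ffun C => if C \in P then (if [pick v in C] is Some v then k v else j0) else j0].
have pick_class C : C \in P -> exists2 v, [pick v in C] = Some v & pblock P v = C.
  move=> CP; case: pickP => [v vC|C0].
    by exists v; rewrite ?(def_pblock equiv_classes_trivIset CP).
  have /and3P[_ _ /negP[]] := equiv_classes_partition.
  by rewrite -(_ : C = set0) //; apply/setP => v; rewrite in_set0 C0.
rewrite (reindex_onto h h') /=; last first.
  move=> k /forallP constk; apply/ffunP => v; rewrite !ffunE equiv_class_mem.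
  case: pickP => [w|/(_ v)]; last by rewrite equiv_class_self.
  by rewrite mem_equiv_class => Rvw; apply/esym/eqP/(implyP (forallP (constk v) w)).
apply: eq_big => g.
  apply/andP/idP => [[_ /eqP hg]|/pfamilyP[/subsetP gP _]].
    apply/pfamilyP; split=> //; apply/subsetP => C; rewrite inE -hg ffunE.
    by apply: contraR => /negPf ->; rewrite eqxx.
  split.
    apply/forallP => u; apply/forallP => v; apply/implyP => Ruv.
    by rewrite !ffunE (def_pblock equiv_classes_trivIset (equiv_class_mem u)) ?mem_equiv_class.
  apply/eqP/ffunP => C; rewrite !ffunE; case: ifP => [CP|notCP].
    by have [v -> <-] := pick_class C CP; rewrite ffunE.
  by apply/esym/eqP; apply: contraFT notCP; apply: gP.
move=> _; rewrite (eq_bigr (fun v => x (g (pblock P v)))) => [|v _]; last by rewrite ffunE.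
have -> : \prod_v x (g (pblock P v)) = \prod_(v in cover P) x (g (pblock P v)).
  by rewrite (cover_partition equiv_classes_partition); apply: eq_bigl => v; rewrite in_setT.
rewrite big_trivIset ?equiv_classes_trivIset //; apply: eq_bigr => C CP.
rewrite -prodr_const; apply: eq_bigr => v vC.
by rewrite (def_pblock equiv_classes_trivIset CP vC).
Qed.
End EquivClasses.

Section SpanningSubgraph.
Variables (V : finType) (S : {set {set V}}).

Definition span_adj : rel V := fun u v => [set u; v] \in S.

Definition components : {set {set V}} :=
  equivalence_partition (connect span_adj) [set: V].

Lemma span_adj_sym : symmetric span_adj.
Proof. by move=> u v; rewrite /span_adj setUC. Qed.

Lemma connect_span_equiv : equivalence_rel (connect span_adj).
Proof.
move=> u v w; split=> [|Cuv]; first exact: connect0.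
apply/idP/idP => [Cuw|]; last exact: connect_trans.
by rewrite (sym_connect_sym span_adj_sym) in Cuv; apply: connect_trans Cuv Cuw.
Qed.

Local Notation mem_component := (mem_equiv_class connect_span_equiv).
Local Notation component_mem := (equiv_class_mem connect_span_equiv).
Local Notation components_trivIset := (equiv_classes_trivIset connect_span_equiv).
Local Notation components_partition := (equiv_classes_partition connect_span_equiv).

Lemma edge_sub_component u v : [set u; v] \in S -> [set u; v] \subset pblock components u.
Proof.
move=> uvS; apply/subsetP => w /set2P[] ->; rewrite mem_component ?connect0 //.
exact: connect1.
Qed.

Lemma component_sub_closed (X : {set V}) u :
  {in S, forall A : {set V}, A \subset X \/ [disjoint A & X]} -> u \in X ->
  pblock components u \subset X.
Proof.
move=> closedX uX; apply/subsetP => w; rewrite mem_component => /closed_connect <- //.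
apply: intro_closed; first exact: sym_connect_sym span_adj_sym.
move=> x y xyS xX; have [/subsetP-> //|] := closedX _ xyS; first by rewrite set22.
by move/disjointFr/(_ (set21 x y)); rewrite xX.
Qed.

Hypothesis S2 : {in S, forall A : {set V}, #|A| = 2%N}.

Lemma small_components_edges :
  {in components, forall C : {set V}, #|C| <= 2}%N -> S = even_blocks components.
Proof.
move=> small; apply/setP => A; rewrite inE; apply/idP/andP => [AS|[AP evenA]].
  have /cards2P[u [v [_ defA]]] : #|A| == 2%N by rewrite S2.
  have sub : A \subset pblock components u by rewrite defA edge_sub_component // -defA.
  have eqA : A = pblock components u.
    by apply/eqP; rewrite eqEcard sub (S2 AS); apply: small; apply: component_mem.
  by rewrite {1}eqA component_mem S2.
have /cards2P[u [v [uv defA]]] : #|A| == 2%N.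
  have := small _ AP; have := partition_block_gt0 components_partition AP.
  by move: evenA; case: #|A| => [|[|[|]]].
have eqA : pblock components u = A.
  by apply: def_pblock; rewrite ?components_trivIset // defA set21.
have /connectP[p path_uv def_v] : connect span_adj u v.
  by rewrite -mem_component eqA defA set22.
case: p path_uv def_v => [_ def_v|w p /= /andP[uwS _] _]; first by rewrite def_v eqxx in uv.
suff -> : A = [set u; w] by [].
apply/esym/eqP.
by rewrite eqEcard -{1}eqA edge_sub_component // (S2 uwS) defA cards2 uv.
Qed.

Lemma matching_components_small :
  trivIset S -> {in components, forall C : {set V}, #|C| <= 2}%N.
Proof.
move=> trivS C CP.
have /set0Pn[u uC] : C != set0.
  by rewrite -card_gt0 (partition_block_gt0 components_partition CP).
rewrite -(def_pblock components_trivIset CP uC).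
case: (pickP [pred A in S | u \in A]) => [A /andP[AS uA]|noA].
  rewrite -(S2 AS); apply/subset_leq_card/component_sub_closed => // B BS.
  have [->|BA] := eqVneq B A; [left | right]; first exact: subxx.
  exact: (trivIsetP trivS).
apply: (@leq_trans #|[set u]|); last by rewrite cards1.
apply/subset_leq_card/component_sub_closed; last exact: set11.
move=> B BS; right; rewrite disjoint_sym disjoints1.
by apply/negP => uB; have := noA B; rewrite /= BS uB.
Qed.
End SpanningSubgraph.

Section Whitney.
Variables (V : finType) (e : rel V).

Definition edge_set : {set {set V}} := [set [set u; v] | u : V, v : V in e u].

Definition monochromatic N (k : {ffun V -> 'I_N}) (A : {set V}) : bool :=
  [forall u in A, forall v in A, k u == k v].

Lemma monochromatic2 N (k : {ffun V -> 'I_N}) u v :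
  monochromatic k [set u; v] = (k u == k v).
Proof.
apply/forallP/idP => [mono|/eqP kuv w].
  by have /implyP/(_ (set21 u v))/forallP/(_ v)/implyP/(_ (set22 u v)) := mono u.
apply/implyP => /set2P w_uv; apply/forallP => w'; apply/implyP => /set2P w'_uv.
by case: w_uv w'_uv => -> [] ->; rewrite ?kuv.
Qed.

Lemma proper_col_prod N (k : {ffun V -> 'I_N}) :
  (proper_col e k)%:R = \prod_(A in edge_set) (1 - (monochromatic k A)%:R) :> rat.
Proof.
rewrite (eq_bigr (fun A => (~~ monochromatic k A)%:R)) => [|A _]; last by case: monochromatic.
rewrite prodr_bool.
suff -> : proper_col e k = [forall A in edge_set, ~~ monochromatic k A] by [].
apply/idP/idP => [/forallP proper|/forallP proper].
  apply/forallP => A; apply/implyP => /imset2P[u v _ euv ->]; rewrite monochromatic2.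
  exact: (implyP (forallP (proper u) v)).
apply/forallP => u; apply/forallP => v; apply/implyP => euv.
by have /implyP := proper [set u; v]; rewrite monochromatic2; apply; apply/imset2P; exists u v.
Qed.

Lemma monochromatic_components N (k : {ffun V -> 'I_N}) (S : {set {set V}}) :
  S \subset edge_set ->
  [forall A in S, monochromatic k A] =
  [forall u, forall v, connect (span_adj S) u v ==> (k u == k v)].
Proof.
move=> /subsetP SE; apply/forallP/forallP => [mono u|constk A].
  apply/forallP => v; apply/implyP => /connectP[p path_up ->] {v}.
  elim: p u path_up => [|w p IHp] u /=; first by rewrite eqxx.
  case/andP => uwS /IHp /eqP <-.
  by have /implyP/(_ uwS) := mono [set u; w]; rewrite monochromatic2.
apply/implyP => AS; have /imset2P[u v _ _ defA] := SE _ AS.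
rewrite defA monochromatic2; apply: (implyP (forallP (constk u) v)).
by apply: connect1; rewrite /span_adj -defA.
Qed.

Theorem chrom_eval_whitney N (x : 'I_N -> rat) (j0 : 'I_N) :
  chrom_eval e x = \sum_(S : {set {set V}} | S \subset edge_set)
    (-1) ^+ #|S| * \prod_(C in components S) pow_sum x #|C|.
Proof.
rewrite /chrom_eval big_mkcond /=.
rewrite (eq_bigr (fun k => \sum_(S : {set {set V}} | S \subset edge_set)
   (-1) ^+ #|S| * \prod_(A in S) (monochromatic k A)%:R * \prod_v x (k v))); last first.
  move=> k _; rewrite -mulr_suml -prod1B_sum_subsets -proper_col_prod.
  by case: proper_col; rewrite ?mul1r ?mul0r.
rewrite exchange_big /=; apply: eq_bigr => S SE.
under eq_bigr do rewrite -mulrA.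
rewrite -mulr_sumr; congr (_ * _).
rewrite -(sum_class_constant_colourings (connect_span_equiv S) x j0) [RHS]big_mkcond.
apply: eq_bigr => k _; rewrite prodr_bool (monochromatic_components k SE).
by case: ifP; rewrite ?mul1r ?mul0r.
Qed.
End Whitney.

Definition pweight (s r : nat) : rat := if odd r then s%:R else s.+2%:R.

Definition spec_pt (s t : nat) : 'I_(s.+1 * t + t) -> rat :=
  fun j => if (j < s.+1 * t)%N then 1 else -1.
Arguments spec_pt : clear implicits.

Lemma pow_sum_spec_pt s t r : pow_sum (spec_pt s t) r = pweight s r * t%:R.
Proof.
rewrite /pow_sum big_split_ord /=.
rewrite (eq_bigr (fun=> 1)) => [|i _]; last by rewrite /spec_pt /= ltn_ord expr1n.
rewrite [X in _ + X](eq_bigr (fun=> (-1) ^+ r)) => [|i _]; last first.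
  by rewrite /spec_pt /= ltnNge leq_addr.
rewrite !sumr_const !card_ord -signr_odd /pweight natrM -mulr_natl.
by case: odd; rewrite ?expr0 ?expr1 -mulr_natl -!natr1; ring.
Qed.

Lemma pow_sum_opp N (x : 'I_N -> rat) r :
  pow_sum (fun j => - x j) r = (-1) ^+ r * pow_sum x r.
Proof. by rewrite /pow_sum mulr_sumr; apply: eq_bigr => j _; rewrite [LHS]exprNn. Qed.

Lemma chrom_eval_opp (V : finType) (e : rel V) N (x : 'I_N -> rat) :
  chrom_eval e (fun j => - x j) = (-1) ^+ #|V| * chrom_eval e x.
Proof. by rewrite /chrom_eval mulr_sumr; apply: eq_bigr => k _; rewrite prodrN. Qed.

Lemma prod_pweight (T : finType) (P : {set {set T}}) s :
  \prod_(C in P) pweight s #|C| =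
  s.+2%:R ^+ #|even_blocks P| * s%:R ^+ (#|P| - #|even_blocks P|).
Proof.
have evP : even_blocks P \subset P by apply/subsetP => C; rewrite inE => /andP[].
rewrite (big_setID (even_blocks P)) (setIidPr evP) -cardsDS //= -!prodr_const.
congr (_ * _); apply: eq_bigr => C; rewrite !inE /pweight.
  by case/andP=> _ /negPf->.
by case/andP=> + CP; rewrite CP /= negbK => ->.
Qed.

Section ChromPoly.
Variables (V : finType) (e : rel V).

Definition chrom_poly (s : nat) : {poly rat} :=
  \sum_(S : {set {set V}} | S \subset edge_set e)
     ((-1) ^+ #|S| * \prod_(C in components S) pweight s #|C|) *: 'X^#|components S|.

Lemma chrom_eval_spec_pt s t : (0 < t)%N ->
  chrom_eval e (spec_pt s t) = (chrom_poly s).[t%:R].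
Proof.
move=> t_gt0; have j0 : 'I_(s.+1 * t + t) by exists 0%N; rewrite addn_gt0 t_gt0 orbT.
rewrite (chrom_eval_whitney e _ j0) /chrom_poly horner_sum; apply: eq_bigr => S _.
rewrite hornerZ hornerXn -mulrA; congr (_ * _).
by under eq_bigr do rewrite pow_sum_spec_pt; rewrite big_split prodr_const.
Qed.

Lemma coef_chrom_poly s j : (chrom_poly s)`_j =
  \sum_(S : {set {set V}} | (S \subset edge_set e) && (#|components S| == j))
     (-1) ^+ #|S| * \prod_(C in components S) pweight s #|C|.
Proof.
rewrite /chrom_poly coef_sum big_mkcondr /=; apply: eq_bigr => S _.
by rewrite coefZ coefXn eq_sym; case: eqP; rewrite ?mulr1 ?mulr0.
Qed.

Lemma coef_chrom_poly_Gamma (F Q : psum) s j :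
  represents_XG e F -> all (fun u => all odd u.2) Q ->
  (forall N (x : 'I_N -> rat), psum_eval x Q = psum_eval x (psum_near F)) ->
  ~~ odd (j + #|V|) ->
  (chrom_poly s)`_j = s%:R ^+ j * \sum_(u <- Q) u.1 * (size u.2 == j)%:R.
Proof.
move=> [wfF XF] oddQ QY even_j.
set C := chrom_poly s; set W := psum_poly (psum_omega F) (pweight s).
have F_C : psum_poly F (pweight s) = C.
  apply: eq_poly_posnat => t t_gt0.
  by rewrite -(psum_eval_poly wfF (in1W (pow_sum_spec_pt s t))) XF chrom_eval_spec_pt.
have W_C : W \Po - 'X = (-1) ^+ #|V| *: C.
  apply: eq_poly_posnat => t t_gt0.
  rewrite horner_comp hornerN hornerX hornerZ /W psum_poly_omega.
  rewrite -(psum_eval_poly (x := fun j => - spec_pt s t j) wfF); last first.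
    by case=> // r _; rewrite pow_sum_opp pow_sum_spec_pt exprS; ring.
  by rewrite XF chrom_eval_opp chrom_eval_spec_pt.
have coefW i : W`_i = (-1) ^+ (i + #|V|) * C`_i.
  have := congr1 (coefp i) W_C; rewrite /= coef_comp_polyNX coefZ.
  move=> /(congr1 ( *%R ((-1) ^+ i))).
  by rewrite mulrA -expr2 sqrr_sign mul1r => ->; rewrite exprD mulrA.
have Q_CW : psum_poly Q (fun=> s%:R) = 2%:R^-1 *: (C + W).
  apply: eq_poly_posnat => t t_gt0.
  rewrite -(psum_eval_poly oddQ (x := spec_pt s t)); last first.
    by move=> r odd_r; rewrite pow_sum_spec_pt /pweight (odd_r : odd r).
  rewrite QY (psum_eval_poly (psum_wf_near wfF) (in1W (pow_sum_spec_pt s t))).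
  by rewrite psum_poly_near F_C.
have := congr1 (coefp j) Q_CW; rewrite /= coef_psum_poly_const => ->.
by rewrite coefZ coefD coefW -signr_odd (negPf even_j) expr0 mul1r; field.
Qed.
End ChromPoly.

Section DisjointEdges.
Variables (V : finType) (e : rel V).
Hypothesis sg : simple_graph e.

Lemma edge_set_card2 : {in edge_set e, forall A : {set V}, #|A| = 2%N}.
Proof.
move=> _ /imset2P[u v _ euv ->]; rewrite cards2.
have [uv|//] := eqVneq u v.
by case: sg => irr _; move: (euv : e u v); rewrite uv irr.
Qed.

Lemma defect2_edge_subgraph (S : {set {set V}}) :
  S \subset edge_set e -> (#|components S| + 2)%N = #|V| ->
  even_blocks (components S) = set0 \/ #|S| = 2%N /\ #|even_blocks (components S)| = 2%N.
Proof.
move=> /subsetP SE defect2.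
have S2 A : A \in S -> #|A| = 2%N by move/SE; apply: edge_set_card2.
case: (defect2_blocks (equiv_classes_partition (connect_span_equiv S)) defect2) => [|[ev2 small]].
  by left.
by right; rewrite -(small_components_edges S2 small) in ev2 *.
Qed.

Lemma coef_chrom_poly_defect2 m s : #|V| = m.+4 ->
  (chrom_poly e s)`_m.+2 =
    (\sum_(S : {set {set V}} | [&& S \subset edge_set e, #|components S| == m.+2
                                & even_blocks (components S) != set0]) 1)
      * (s.+2%:R ^+ 2 * s%:R ^+ m)
  + (\sum_(S : {set {set V}} | [&& S \subset edge_set e, #|components S| == m.+2
                                & even_blocks (components S) == set0]) (-1) ^+ #|S|)
      * s%:R ^+ m.+2.
Proof.
move=> cardV; rewrite coef_chrom_poly (bigID (fun S => even_blocks (components S) == set0)).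
rewrite [LHS]addrC !mulr_suml; congr (_ + _).
  apply: congr_big => // [S|S /andP[/andP[SE /eqP compS] ev]]; first by rewrite andbA.
  have defect2 : (#|components S| + 2)%N = #|V| by rewrite compS cardV addn2.
  have [ev0|[S2 ev2]] := defect2_edge_subgraph SE defect2.
    by rewrite ev0 eqxx in ev.
  by rewrite prod_pweight compS S2 ev2 expr2 mulN1r opprK !mul1r !subSS subn0.
apply: congr_big => // [S|S /andP[/andP[SE /eqP compS] /eqP ev0]]; first by rewrite andbA.
by rewrite prod_pweight compS ev0 cards0 subn0 expr0 mul1r mulrC.
Qed.

Lemma disjoint_edges_defect2 a b c d : e a b -> e c d -> uniq [:: a; b; c; d] ->
  exists S : {set {set V}}, [/\ S \subset edge_set e,
    (#|components S| + 2)%N = #|V| & even_blocks (components S) != set0].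
Proof.
move=> eab ecd abcd; set S := [set [set a; b]; [set c; d]].
move: abcd; rewrite /= !inE !negb_or => /and4P[/and3P[ab ac ad] /andP[bc bd] cd _].
have ab_cd : [disjoint [set a; b] & [set c; d]].
  by rewrite disjoints_subset subUset !sub1set !inE !negb_or ac ad bc bd.
have S2 : {in S, forall A : {set V}, #|A| = 2%N}.
  by move=> A /set2P[]->; rewrite cards2 ?ab ?cd.
have trivS : trivIset S.
  apply/trivIsetP => A B /set2P[]-> /set2P[]->; rewrite ?eqxx // => _.
  by rewrite disjoint_sym.
have small := matching_components_small S2 trivS.
have evS := small_components_edges S2 small.
have cardS : #|S| = 2%N.
  rewrite cards2; case: eqVneq => // ab_eq_cd.
  by have := disjointFr ab_cd (set21 a b); rewrite -ab_eq_cd set21.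
exists S; split.
- apply/subsetP => A /set2P[]->; apply/imset2P; [exists a b | exists c d] => //.
- rewrite (card_small_blocks (equiv_classes_partition (connect_span_equiv S)) small).
  by rewrite -evS cardS addnC.
- by rewrite -evS; apply/set0Pn; exists [set a; b]; rewrite set21.
Qed.

Theorem Gamma_no_disjoint_edges F :
  represents_XG e F -> in_Gamma (psum_near F) -> ~ has_disjoint_edges e.
Proof.
move=> repF [Q [oddQ QY]] [a [b [c [d [eab ecd abcd]]]]].
have [S0 [S0E defect2 evS0]] := disjoint_edges_defect2 eab ecd abcd.
have [m cardV] : exists m, #|V| = m.+4.
  exists (#|V| - 4)%N; have := max_card (mem [:: a; b; c; d]).
  by rewrite (card_uniqP abcd) /=; lia.
have even_j : ~~ odd (m.+2 + #|V|).
  by rewrite cardV (_ : (m.+2 + m.+4 = m.+3.*2)%N) ?odd_double //; lia.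
have E1 := coef_chrom_poly_Gamma 1 repF oddQ QY even_j.
have E2 := coef_chrom_poly_Gamma 2 repF oddQ QY even_j.
rewrite coef_chrom_poly_defect2 // in E1; rewrite coef_chrom_poly_defect2 // in E2.
set A := \sum_(S | _) 1 in E1 E2; set B := \sum_(S | _) _ in E1 E2.
have A_ge1 : 1 <= A.
  rewrite /A (bigD1 S0) /=; last by rewrite S0E evS0 /= andbT -(eqn_add2r 2) defect2 cardV addn2.
  by rewrite lerDl sumr_ge0.
have : 20%:R * 2%:R ^+ m * A = 0.
  rewrite !expr1n !mulr1 mul1r in E1.
  have -> : 20%:R * 2%:R ^+ m * A = 2%:R ^+ m.+2 * (A * 3%:R ^+ 2 + B)
      - (A * (4%:R ^+ 2 * 2%:R ^+ m) + B * 2%:R ^+ m.+2) by rewrite !exprS; ring.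
  by rewrite E1 E2 subrr.
move/eqP; rewrite !mulf_eq0 !pnatr_eq0 expf_eq0 pnatr_eq0 andbF /= => /eqP A0.
by rewrite A0 ler10 in A_ge1.
Qed.
End DisjointEdges.

Theorem mainTheorem3 (V : finType) (e : rel V) (F : psum) :
  simple_graph e ->
  represents_XG e F ->
  in_Gamma (psum_near F) ->
  ~ has_disjoint_edges e /\
  (connected_graph e -> is_triangle e \/ is_star e).
Proof.
move=> sg repF YGamma.
have nde := Gamma_no_disjoint_edges sg repF YGamma.
by split=> // conn; apply: triangle_or_star.
Qed.
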